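(* Let $\Omega\subset\mathbb{R}^2$ have property (i). 1. If $\Omega$ has property $( * )$, then for every point $\omega\in\partial\Omega$ there exists $\omega^\diamond\in\partial\Omega^\diamond$ such that $\omega\in L(\omega^\diamond)$. 2. If $\Omega$ has property $( ** )$, then for every point $\omega^\diamond\in\partial\Omega^\diamond$ there exists $\omega\in\partial\Omega$ such that $\omega\in L(\omega^\diamond)$.
   Context: Points of $\mathbb{R}^2$: $(x,y)$; of $\mathbb{R}^{2*}$: $(p,q)$. Antipolar: $\Omega^\diamond=\{(p,q):px-qy\ge1\ \forall (x,y)\in\Omega\}$. For $\omega^\diamond=(p,q)$, $L(\omega^\diamond)=\{(x,y)\in\mathbb{R}^2: px-qy=1\}$. Property (i): $\Omega$ nonempty, convex, closed, $0\notin\Omega$, $\lambda\Omega\subset\Omega$ for all $\lambda>1$. $( * )$: $\lambda\Omega\cap\partial\Omega=\varnothing$ for all $\lambda>1$. $( ** )$: with $C=\operatorname{cl}(\mathbb{R}_+\Omega)$, $\mathbb{R}_+=[0,\infty)$, and $\partial C=l_0\cup l_1$ its two boundary rays, $\operatorname{dist}(l_0,\Omega)=\operatorname{dist}(l_1,\Omega)=0$. *)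

From HB Require Import structures.
From mathcomp Require Import all_boot all_order all_algebra.
From mathcomp Require Import all_classical all_reals all_analysis.
Set Implicit Arguments. Unset Strict Implicit. Unset Printing Implicit Defensive.
Import Order.TTheory GRing.Theory Num.Theory numFieldNormedType.Exports.
Local Open Scope classical_set_scope.
Local Open Scope ring_scope.

Section Defs.
Variable R : realType.
Notation P := (R * R)%type.

Definition bdry (A : set P) : set P := closure A `\` interior A.

Definition scal (l : R) (w : P) : P := (l * w.1, l * w.2).

Definition convex2 (A : set P) : Prop :=
  forall a b, A a -> A b -> forall t : R, 0 <= t <= 1 ->
    A (t * a.1 + (1 - t) * b.1, t * a.2 + (1 - t) * b.2).

Definition scale_set (l : R) (A : set P) : set P := [set scal l w | w in A].

Definition prop_i (O : set P) : Prop :=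
  O !=set0 /\ convex2 O /\ closed O /\ ~ O (0, 0) /\
  (forall l : R, 1 < l -> scale_set l O `<=` O).

Definition prop_star (O : set P) : Prop :=
  forall l : R, 1 < l -> scale_set l O `&` bdry O = set0.

Definition cone_of (O : set P) : set P :=
  closure [set scal t w | t in [set t : R | 0 <= t] & w in O].

Definition ray (d : P) : set P := [set scal t d | t in [set t : R | 0 <= t]].

Definition dist0 (A B : set P) : Prop :=
  forall e : R, 0 < e -> exists a b, A a /\ B b /\
    (a.1 - b.1) ^+ 2 + (a.2 - b.2) ^+ 2 < e ^+ 2.

Definition prop_starstar (O : set P) : Prop :=
  forall d : P, d != (0, 0) -> ray d `<=` bdry (cone_of O) -> dist0 (ray d) O.

Definition antipolar (O : set P) : set P :=
  [set pq | forall w, O w -> 1 <= pq.1 * w.1 - pq.2 * w.2].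

Definition Lline (pq : P) : set P := [set w | pq.1 * w.1 - pq.2 * w.2 = 1].

End Defs.

(* Write <p, w> = p.1 * w.1 - p.2 * w.2, so that the antipolar of Omega is
   {p | <p, .> >= 1 on Omega}.  If w is in Omega, p in its antipolar and
   <p, w> = 1, then w and p lie on the respective boundaries, since scaling
   either one by t < 1 leaves its set; both parts amount to finding such pairs.
   (1) By (star), 2w is interior to Omega and Omega meets the line R w only in
   {mu w | mu >= 1}.  A one-dimensional Hahn-Banach step, choosing a slope
   between a supremum and an infimum, extends mu w |-> mu to a functional that
   is >= 1 on Omega.
   (2) The antipolar is closed, so it contains p.  By (star star), Omega stays
   in a sector |k| <= G <p, .> around the kernel coordinate k of <p, .>:
   otherwise a kernel ray would bound the cone C while staying at positive
   distance from Omega.  Hence <p, .> attains its minimum mu >= 1 on Omega,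
   and mu > 1 would put a whole neighbourhood of p in the antipolar. *)

From HB Require Import structures.
From mathcomp Require Import all_boot all_order all_algebra.
From mathcomp Require Import all_classical all_reals all_analysis.
From mathcomp Require Import ring lra.

Set Implicit Arguments.
Unset Strict Implicit.
Unset Printing Implicit Defensive.
Import Order.TTheory GRing.Theory Num.Theory numFieldNormedType.Exports.
Local Open Scope classical_set_scope.
Local Open Scope ring_scope.

Section Plane.
Variable R : realType.
Local Notation P := (R * R)%type.

Definition pairing (p w : P) : R := p.1 * w.1 - p.2 * w.2.

Lemma add_pairE (u v : P) : u + v = (u.1 + v.1, u.2 + v.2).
Proof. by []. Qed.

Lemma scale_pairE (a : R) (u : P) : a *: u = (a * u.1, a * u.2).
Proof. by []. Qed.

Lemma scalE (a : R) (u : P) : scal a u = a *: u.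
Proof. by []. Qed.

Lemma pairingC (p w : P) : pairing p w = pairing w p.
Proof. by rewrite /pairing mulrC [p.2 * _]mulrC. Qed.

Lemma pairingDr (p u v : P) : pairing p (u + v) = pairing p u + pairing p v.
Proof. by rewrite /pairing /=; ring. Qed.

Lemma pairingZr (p u : P) (a : R) : pairing p (a *: u) = a * pairing p u.
Proof. by rewrite scale_pairE /pairing /=; ring. Qed.

Lemma pairingDl (p q w : P) : pairing (p + q) w = pairing p w + pairing q w.
Proof. by rewrite pairingC pairingDr !(pairingC w). Qed.

Lemma pairingZl (p w : P) (a : R) : pairing (a *: p) w = a * pairing p w.
Proof. by rewrite pairingC pairingZr pairingC. Qed.

Lemma pairingNl (p w : P) : pairing (- p) w = - pairing p w.
Proof. by rewrite -scaleN1r pairingZl mulN1r. Qed.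

Lemma pairing_continuous (p : P) : continuous (pairing p).
Proof.
move=> z; apply: cvgB; apply: cvgM; try exact: cvg_cst.
  exact: (@cvg_fst _ _ (nbhs z.1) (nbhs z.2)).
exact: (@cvg_snd _ _ (nbhs z.1) (nbhs z.2)).
Qed.

Definition sqnorm (f : P) : R := f.1 ^+ 2 + f.2 ^+ 2.

Lemma sqnorm_ge0 (f : P) : 0 <= sqnorm f.
Proof. by rewrite addr_ge0 ?sqr_ge0. Qed.

Lemma sqnorm_gt0 (f : P) : f != 0 -> 0 < sqnorm f.
Proof.
case: f => [a b] f0; rewrite lt_def sqnorm_ge0 andbT /sqnorm /= paddr_eq0 ?sqr_ge0 //.
by rewrite !sqrf_eq0; apply: contra f0 => /andP[/eqP-> /eqP->].
Qed.

Lemma pairing_sqr_le (p w : P) : pairing p w ^+ 2 <= sqnorm p * sqnorm w.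
Proof.
rewrite -subr_ge0.
have -> : sqnorm p * sqnorm w - pairing p w ^+ 2 = (p.1 * w.2 + p.2 * w.1) ^+ 2.
  by rewrite /sqnorm /pairing; ring.
exact: sqr_ge0.
Qed.

(* For [f != 0], [(pairing f, pairing (ker_coord f))] are the coordinates in
   the basis [(dual_pt f, ker_dir f)]; see [pairing_decomp]. *)
Definition dual_pt (f : P) : P := (f.1 / sqnorm f, - f.2 / sqnorm f).
Definition ker_dir (f : P) : P := (f.2, f.1).
Definition ker_coord (f : P) : P := (f.2 / sqnorm f, - f.1 / sqnorm f).

Lemma pairing_dual_pt (f : P) : f != 0 -> pairing f (dual_pt f) = 1.
Proof.
move=> /sqnorm_gt0; rewrite /pairing /dual_pt /sqnorm /= => N0.
by field; rewrite gt_eqF.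
Qed.

Lemma pairing_ker_dir (f : P) : pairing f (ker_dir f) = 0.
Proof. by rewrite /pairing /= mulrC subrr. Qed.

Lemma ker_dir_neq0 (f : P) : f != 0 -> ker_dir f != 0.
Proof. by case: f => a b; apply: contra => /eqP[-> ->]. Qed.

Lemma pairing_decomp (f z : P) : f != 0 ->
  z = pairing f z *: dual_pt f + pairing (ker_coord f) z *: ker_dir f.
Proof.
move=> /sqnorm_gt0; case: f z => [a b] [x y].
rewrite /pairing /dual_pt /ker_coord /ker_dir /sqnorm /= => N0.
by rewrite add_pairE !scale_pairE /=; congr pair; field; rewrite gt_eqF.
Qed.

Lemma ker_dirK : involutive ker_dir.
Proof. by case. Qed.

Lemma ker_coord_ker_dir (f : P) : ker_coord (ker_dir f) = dual_pt f.
Proof. by rewrite /ker_coord /dual_pt /sqnorm /= addrC. Qed.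

Lemma pairing_ker_dir_eq0 (w z : P) : w != 0 ->
  pairing (ker_dir w) z = 0 -> z = pairing (dual_pt w) z *: w.
Proof.
move=> w0 ker; rewrite {1}(pairing_decomp z (ker_dir_neq0 w0)) ker scale0r add0r.
by rewrite ker_coord_ker_dir ker_dirK.
Qed.


Lemma nbhs_line (v w : P) (A : set P) : nbhs w A ->
  exists2 h : R, 0 < h & forall s, `|s| < h -> A (w + s *: v).
Proof.
move=> Aw.
have line_cvg : w + s *: v @[s --> (0 : R)] --> w.
  rewrite -[X in _ --> X]addr0 -(scale0r v).
  by apply: cvgD; [exact: cvg_cst | apply: cvgZ; [exact: cvg_id | exact: cvg_cst]].
have /nbhs_ballP[h h0 Ah] := line_cvg A Aw.
by exists h => // s hs; apply: Ah; rewrite /ball /= sub0r normrN.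
Qed.

Lemma halfplane_not_interior (A : set P) (f v w : P) (c : R) :
  (forall z, A z -> c <= pairing f z) -> pairing f w <= c -> 0 < pairing f v ->
  ~ interior A w.
Proof.
move=> Ac fw fv /(nbhs_line v)[h h0 Ah].
have hs : `|- (h / 2)| < h by rewrite normrN gtr0_norm ?divr_gt0 //; lra.
have := Ac _ (Ah _ hs); rewrite pairingDr pairingZr.
have : 0 < h / 2 * pairing f v by rewrite mulr_gt0 ?divr_gt0.
lra.
Qed.

Lemma bdry_supported (A : set P) (f w : P) :
  A w -> (forall z, A z -> 1 <= pairing f z) -> pairing f w = 1 -> bdry A w.
Proof.
move=> Aw Af fw; split; first exact: subset_closure.
by apply: (halfplane_not_interior (v := w) Af); rewrite fw.
Qed.

Lemma closed_pairing_ge (f : P) (c : R) : closed [set z | c <= pairing f z].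
Proof.
change (closed (pairing f @^-1` [set x | c <= x])).
by apply: (continuous_closedP _).1; [exact: pairing_continuous | exact: closed_ge].
Qed.

Lemma closed_pairing_le (f : P) (c : R) : closed [set z | pairing f z <= c].
Proof.
change (closed (pairing f @^-1` [set x | x <= c])).
by apply: (continuous_closedP _).1; [exact: pairing_continuous | exact: closed_le].
Qed.

Lemma bdry_closed_mem (A : set P) (w : P) : closed A -> bdry A w -> A w.
Proof. by move=> /closure_id {2}-> []. Qed.

Lemma antipolar_closed (O : set P) : closed (antipolar O).
Proof.
have -> : antipolar O = \bigcap_(w in O) [set p | 1 <= pairing w p].
  by apply/seteqP; split => p Ap w Ow; have := Ap w Ow; rewrite /= pairingC.
by apply: closed_bigI => w _; exact: closed_pairing_ge.
Qed.

Lemma sup_between (X Y : set R) : X !=set0 -> Y !=set0 ->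
  (forall x y, X x -> Y y -> x <= y) -> ubound X (sup X) /\ lbound Y (sup X).
Proof.
move=> [x0 Xx0] [y0 Yy0] XY.
have supX : has_sup X by split; [exists x0 | exists y0 => x Xx; exact: XY].
split; first exact: sup_upper_bound.
by move=> y Yy; apply: ge_sup; [exists x0 | move=> x Xx; exact: XY].
Qed.

Lemma convex2_comb (O : set P) (a b : P) (t : R) : convex2 O ->
  O a -> O b -> 0 <= t <= 1 -> O (t *: a + (1 - t) *: b).
Proof. by rewrite add_pairE !scale_pairE => cvxO Oa Ob; exact: cvxO. Qed.

Section AntipolarExtension.
Variables (O : set P) (u v : P).
Hypotheses (cvxO : convex2 O)
  (ker_ge1 : forall z, O z -> pairing v z = 0 -> 1 <= pairing u z).

(* Apply [ker_ge1] where the segment [z, z'] crosses the line [pairing v = 0]. *)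
Lemma antipolar_slopes (z z' : P) : O z -> O z' ->
  0 < pairing v z -> pairing v z' < 0 ->
  (1 - pairing u z) / pairing v z <= (pairing u z' - 1) / - pairing v z'.
Proof.
move=> Oz Oz'; set a := pairing v z; set b := - pairing v z'.
rewrite -oppr_gt0 -/b => a0 b0.
have ab0 : 0 < a + b by lra.
set t := b / (a + b).
have t01 : 0 <= t <= 1.
  by rewrite divr_ge0 ?(ltW b0) ?(ltW ab0) //= ler_pdivrMr // mul1r; lra.
have vt : pairing v (t *: z + (1 - t) *: z') = 0.
  rewrite pairingDr !pairingZr -/a -[pairing v z']opprK -/b /t.
  by field; rewrite gt_eqF.
have := ker_ge1 (convex2_comb cvxO Oz Oz' t01) vt.
rewrite pairingDr !pairingZr -subr_ge0 => ut.
rewrite -subr_ge0.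
have -> : (pairing u z' - 1) / b - (1 - pairing u z) / a
          = (a + b) / (a * b) * (t * pairing u z + (1 - t) * pairing u z' - 1).
  by rewrite /t; field; rewrite !gt_eqF.
by rewrite mulr_ge0 // divr_ge0 ?mulr_ge0 // ltW.
Qed.

Lemma antipolar_extension :
  (exists2 z, O z & 0 < pairing v z) -> (exists2 z, O z & pairing v z < 0) ->
  exists s, antipolar O (u + s *: v).
Proof.
move=> [z1 Oz1 vz1] [z2 Oz2 vz2].
pose X := [set (1 - pairing u z) / pairing v z | z in [set z | O z /\ 0 < pairing v z]].
pose Y := [set (pairing u z - 1) / - pairing v z | z in [set z | O z /\ pairing v z < 0]].
have [] := @sup_between X Y.
- by exists ((1 - pairing u z1) / pairing v z1); exists z1.
- by exists ((pairing u z2 - 1) / - pairing v z2); exists z2.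
- by move=> _ _ [z [Oz vz] <-] [z' [Oz' vz'] <-]; exact: antipolar_slopes.
move=> Xs Ys; exists (sup X) => z Oz.
change (1 <= pairing (u + sup X *: v) z); rewrite pairingDl pairingZl.
have [vz|vz|vz] := ltrgtP 0 (pairing v z).
- have : (1 - pairing u z) / pairing v z <= sup X by apply: Xs; exists z.
  by rewrite ler_pdivrMr // => ?; lra.
- have : sup X <= (pairing u z - 1) / - pairing v z by apply: Ys; exists z.
  by rewrite ler_pdivlMr ?oppr_gt0 // => ?; lra.
- by rewrite -vz mulr0 addr0; exact: ker_ge1.
Qed.

End AntipolarExtension.

Section SupportingLine.
Variables (O : set P) (w : P).
Hypotheses (cvxO : convex2 O) (clO : closed O) (zero_notin : ~ O (0, 0))
  (scO : forall l, 1 < l -> scale_set l O `<=` O) (Ostar : prop_star O)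
  (bdry_w : bdry O w).

Let Ow : O w := bdry_closed_mem clO bdry_w.

Lemma star_ray_ge1 (mu : R) : O (mu *: w) -> 1 <= mu.
Proof.
move=> Omuw; rewrite leNgt; apply/negP => mu_lt1.
have [mu_le0|mu_gt0] := lerP mu 0.
  have t01 : 0 <= (1 - mu)^-1 <= 1 by rewrite invr_ge0 invf_le1; lra.
  have := convex2_comb cvxO Omuw Ow t01.
  rewrite scalerA -scalerDl.
  have -> : (1 - mu)^-1 * mu + (1 - (1 - mu)^-1) = 0 by field; lra.
  by rewrite scale0r.
have : (scale_set mu^-1 O `&` bdry O) w.
  by split=> //; exists (mu *: w); rewrite // scalE scalerA mulVf ?gt_eqF ?scale1r.
by rewrite Ostar // invf_gt1.
Qed.

Lemma star_interior_double : interior O (2 *: w).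
Proof.
have two_gt1 : (1 : R) < 2 by lra.
have O2w : O (2 *: w) by apply: (scO two_gt1); exists w.
apply: contrapT => not_int.
have : (scale_set 2 O `&` bdry O) (2 *: w).
  by split; [exists w | split => //; exact: subset_closure].
by rewrite Ostar.
Qed.

Lemma star_supporting_antipolar : exists2 wd, antipolar O wd & pairing wd w = 1.
Proof.
have w0 : w != 0 by apply/eqP => w_eq0; apply: zero_notin; move: Ow; rewrite w_eq0.
set v := ker_dir w; have v0 : v != 0 := ker_dir_neq0 w0.
have vw : pairing v w = 0 by rewrite pairingC pairing_ker_dir.
have [h h0 Oh] := nbhs_line (dual_pt v) star_interior_double.
have v_line s : pairing v (2 *: w + s *: dual_pt v) = s.
  by rewrite pairingDr !pairingZr vw pairing_dual_pt // mulr0 mulr1 add0r.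
have hs : `|h / 2| < h by rewrite gtr0_norm ?divr_gt0 //; lra.
have [s Aus] : exists s, antipolar O (dual_pt w + s *: v).
  apply: (antipolar_extension cvxO).
  - move=> z Oz /(pairing_ker_dir_eq0 w0) z_ray; apply: star_ray_ge1.
    by rewrite -z_ray.
  - by exists (2 *: w + (h / 2) *: dual_pt v); [apply: Oh | rewrite v_line divr_gt0].
  - exists (2 *: w + (- (h / 2)) *: dual_pt v); first by apply: Oh; rewrite normrN.
    by rewrite v_line oppr_lt0 divr_gt0.
exists (dual_pt w + s *: v) => //.
by rewrite pairingDl pairingZl vw mulr0 addr0 pairingC pairing_dual_pt.
Qed.

End SupportingLine.

Lemma cone_of_halfplane (O : set P) (f : P) : antipolar O f ->
  forall z, cone_of O z -> 0 <= pairing f z.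
Proof.
move=> Af; set half := [set z | 0 <= pairing f z].
have closed_half : closed half by exact: closed_pairing_ge.
have cone_half : [set scal t w | t in [set t | 0 <= t] & w in O] `<=` half.
  move=> _ [t t0 [z Oz <-]]; rewrite /half /= scalE pairingZr mulr_ge0 //.
  by have : 1 <= pairing f z := Af _ Oz; lra.
by move=> z /(closureS cone_half); rewrite -(closure_id _).1.
Qed.

Section Sector.
Variables (O : set P) (f m d g : P).
Hypotheses (Af : antipolar O f) (fm : pairing f m = 1) (fd : pairing f d = 0)
  (decomp : forall z, z = pairing f z *: m + pairing g z *: d).

Lemma ray_sub_cone :
  (forall e, 0 < e -> exists2 z, O z & pairing f z < e * pairing g z) ->
  ray d `<=` cone_of O.
Proof.
move=> flat _ [t t0 <-] B /(nbhs_line m)[h h0 Bh]; rewrite /= in t0.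
have t1 : 0 < t + 1 by lra.
have [z Oz fz] := flat (h / (t + 1)) (divr_gt0 h0 t1).
have fz1 : 1 <= pairing f z := Af Oz.
have gz : 0 < pairing g z.
  have : 0 < h / (t + 1) * pairing g z by lra.
  by rewrite pmulr_rgt0 // divr_gt0.
set r := pairing f z / pairing g z.
have r0 : 0 <= r by rewrite divr_ge0 //; lra.
have rh : r < h / (t + 1) by rewrite ltr_pdivrMr.
exists ((t / pairing g z) *: z); split.
  by exists (t / pairing g z); [rewrite /= divr_ge0 // ltW | exists z].
have -> : (t / pairing g z) *: z = scal t d + (t * r) *: m.
  rewrite {2}(decomp z) scalerDr !scalerA divfK ?gt_eqF // addrC scalE.
  by rewrite /r mulrA mulrAC.
apply: Bh; rewrite ger0_norm; last exact: mulr_ge0.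
have : t * (h / (t + 1)) < h by rewrite mulrA ltr_pdivrMr //; nra.
have : t * r <= t * (h / (t + 1)) by rewrite ler_wpM2l // ltW.
lra.
Qed.

Lemma ray_not_interior_cone (p : P) : ray d p -> ~ interior (cone_of O) p.
Proof.
move=> [t _ <-]; apply: (halfplane_not_interior (v := m) (cone_of_halfplane Af)).
  by rewrite scalE pairingZr fd mulr0.
by rewrite fm ltr01.
Qed.

Lemma ray_not_dist0 : ~ dist0 (ray d) O.
Proof.
set N := sqnorm f; have N0 : 0 <= N := sqnorm_ge0 f.
set e := (N + 1)^-1; have e0 : 0 < e by rewrite invr_gt0; lra.
move=> /(_ _ e0)[_ [b [[t _ <-] [Ob near_b]]]].
set a := scal t d in near_b *.
have fa : pairing f a = 0 by rewrite /a scalE pairingZr fd mulr0.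
have fb : 1 <= pairing f b := Af Ob.
have := pairing_sqr_le f (a.1 - b.1, a.2 - b.2).
have -> : pairing f (a.1 - b.1, a.2 - b.2) = pairing f a - pairing f b.
  by rewrite /pairing /=; ring.
rewrite fa sub0r sqrrN.
have eN : e * (N + 1) = 1 by rewrite mulVf // gt_eqF; lra.
have fb2 : 1 <= pairing f b ^+ 2 by rewrite -[1](expr1n _ 2) lerXn2r // ?nnegrE; lra.
rewrite /sqnorm -/(sqnorm f) -/N /=; set q := _ + _ in near_b * => fb_le.
have Ne : N * e ^+ 2 < 1.
  have -> : N * e ^+ 2 = e * (e * (N + 1)) - e ^+ 2 by ring.
  by rewrite eN mulr1; nra.
have : N * q <= N * e ^+ 2 by rewrite ler_wpM2l // ltW.
lra.
Qed.

(* Otherwise [O] has points ever closer to the direction [d]: [ray d] then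
   bounds the cone, although [pairing f] keeps it away from [O]. *)
Lemma starstar_sector : prop_starstar O -> d != 0 ->
  exists2 e : R, 0 < e & forall z, O z -> e * pairing g z <= pairing f z.
Proof.
move=> Oss d0; apply: contrapT => no_sector.
have flat e : 0 < e -> exists2 z, O z & pairing f z < e * pairing g z.
  move=> e0; apply: contrapT => no_z; apply: no_sector; exists e => // z Oz.
  by rewrite leNgt; apply/negP => lt_fg; apply: no_z; exists z.
apply: ray_not_dist0; apply: Oss d0 _ => p dp; split.
  exact/subset_closure/(ray_sub_cone flat).
exact: ray_not_interior_cone.
Qed.

End Sector.

Lemma starstar_ker_coord_bound (O : set P) (f : P) :
  prop_starstar O -> antipolar O f -> f != 0 ->
  exists2 G : R, 0 <= G &
    forall z, O z -> `|pairing (ker_coord f) z| <= G * pairing f z.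
Proof.
move=> Oss Af f0.
have fm := pairing_dual_pt f0; have fd := pairing_ker_dir f.
have Nd0 : - ker_dir f != 0 by rewrite oppr_eq0 ker_dir_neq0.
have fNd : pairing f (- ker_dir f) = 0 by rewrite -scaleN1r pairingZr fd mulr0.
have decompN z : z = pairing f z *: dual_pt f
                     + pairing (- ker_coord f) z *: (- ker_dir f).
  by rewrite pairingNl scaleNr scalerN opprK; exact: pairing_decomp.
have [e1 e1_gt0 le1] :=
  starstar_sector Af fm fd (fun z => pairing_decomp z f0) Oss (ker_dir_neq0 f0).
have [e2 e2_gt0 le2] :=
  starstar_sector Af fm fNd decompN Oss Nd0.
exists (e1^-1 + e2^-1) => [|z Oz]; first by rewrite addr_ge0 // invr_ge0 ltW.
have fz : 0 <= pairing f z by have : 1 <= pairing f z := Af z Oz; lra.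
have h1 : pairing (ker_coord f) z <= e1^-1 * pairing f z.
  by rewrite mulrC ler_pdivlMr // mulrC le1.
have h2 : - pairing (ker_coord f) z <= e2^-1 * pairing f z.
  by rewrite mulrC ler_pdivlMr // mulrC -pairingNl le2.
have : 0 <= e1^-1 * pairing f z by rewrite mulr_ge0 // invr_ge0 ltW.
have : 0 <= e2^-1 * pairing f z by rewrite mulr_ge0 // invr_ge0 ltW.
rewrite ler_norml mulrDl; move=> ? ?; apply/andP; split; lra.
Qed.

Lemma pairing_min_attained (O : set P) (f : P) (G : R) :
  closed O -> O !=set0 -> f != 0 -> antipolar O f -> 0 <= G ->
  (forall z, O z -> `|pairing (ker_coord f) z| <= G * pairing f z) ->
  exists2 c, O c & forall z, O z -> pairing f c <= pairing f z.
Proof.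
move=> clO [z0 Oz0] f0 Af G0 bound; set K := pairing f z0.
pose S := O `&` [set z | pairing f z <= K].
pose coords (st : P) : P := st.1 *: dual_pt f + st.2 *: ker_dir f.
have S_sub : S `<=` coords @` (`[0, K] `*` `[- (G * K), G * K]).
  move=> z [Oz /= zK]; exists (pairing f z, pairing (ker_coord f) z); last first.
    by rewrite /coords /= -(pairing_decomp z f0).
  have fz : 1 <= pairing f z := Af z Oz.
  have := bound z Oz; rewrite ler_norml => /andP[lo hi].
  have : G * pairing f z <= G * K by rewrite ler_wpM2l.
  by move=> ?; split; rewrite /= in_itv /=; apply/andP; split; lra.
have S_compact : compact S.
  apply: subclosed_compact S_sub.
    by apply: closedI => //; exact: closed_pairing_le.
  apply: continuous_compact; last by apply: compact_setX; exact: segment_compact.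
  apply: continuous_subspaceT => st; apply: cvgD; apply: cvgZ; try exact: cvg_cst.
    exact: (@cvg_fst _ _ (nbhs st.1) (nbhs st.2)).
  exact: (@cvg_snd _ _ (nbhs st.1) (nbhs st.2)).
have S0 : S !=set0 by exists z0; split => //=; exact: lexx.
have [c /set_mem[Oc _] cmin] :=
  compact_EVT_min S0 S_compact (continuous_subspaceT (@pairing_continuous f)).
exists c => // z Oz; have [zK|Kz] := lerP (pairing f z) K.
  by apply: cmin; apply/mem_set.
have := cmin z0 (mem_set (conj Oz0 (lexx K))); rewrite -/K; lra.
Qed.

Lemma antipolar_interior (O : set P) (f : P) (G mu : R) : f != 0 -> 1 < mu ->
  (forall z, O z -> mu <= pairing f z) ->
  (forall z, O z -> `|pairing (ker_coord f) z| <= G * pairing f z) ->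
  interior (antipolar O) f.
Proof.
move=> f0 mu_gt1 f_ge_mu bound; have mu0 : 0 < mu by lra.
pose lower (p : P) := pairing (dual_pt f) p - G * `|pairing (ker_dir f) p|.
have lower_cvg : lower p @[p --> f] --> lower f.
  apply: cvgB; first exact: pairing_continuous.
  by apply: cvgM; [exact: cvg_cst | apply: cvg_norm; exact: pairing_continuous].
have lower_f : lower f = 1.
  by rewrite /lower !(pairingC _ f) pairing_dual_pt // pairing_ker_dir normr0 mulr0 subr0.
have : \forall p \near f, mu^-1 < lower p.
  by apply: (cvgr_gt _ lower_cvg); rewrite lower_f invf_lt1.
apply: filterS => p lower_p z Oz; change (1 <= pairing p z).
have fz := f_ge_mu z Oz; have gz := bound z Oz.
rewrite (pairing_decomp z f0) pairingDr !pairingZr !(pairingC p).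
set a := pairing f z; set k := pairing (ker_coord f) z.
set pm := pairing (dual_pt f) p; set pd := pairing (ker_dir f) p.
have kd : - (G * a * `|pd|) <= k * pd.
  have : `|k * pd| <= G * a * `|pd| by rewrite normrM ler_wpM2r.
  by rewrite ler_norml => /andP[].
have lower_gt0 : 0 < lower p by apply: lt_trans lower_p; rewrite invr_gt0.
have : mu * lower p <= a * lower p by rewrite ler_wpM2r // ltW.
have : 1 < mu * lower p by rewrite -(mulfV (lt0r_neq0 mu0)) ltr_pM2l.
have -> : a * lower p = a * pm - G * a * `|pd| by rewrite /lower /= -/pm -/pd; ring.
lra.
Qed.

Lemma starstar_antipolar_attained (O : set P) (f : P) :
  prop_i O -> prop_starstar O -> bdry (antipolar O) f ->
  exists2 c, O c & pairing f c = 1.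
Proof.
move=> [[z0 Oz0] [_ [clO _]]] Oss bdry_f.
have Af := bdry_closed_mem (antipolar_closed (O := O)) bdry_f.
have f0 : f != 0.
  by apply/eqP => f_eq0; have := Af z0 Oz0; rewrite f_eq0 /= !mul0r subrr ler10.
have [G G0 bound] := starstar_ker_coord_bound Oss Af f0.
have [c Oc cmin] := pairing_min_attained clO (ex_intro _ z0 Oz0) f0 Af G0 bound.
exists c => //; apply/eqP; rewrite eq_le (Af c Oc) andbT leNgt.
by apply/negP => c_gt1; apply: bdry_f.2; exact: antipolar_interior f0 c_gt1 cmin bound.
Qed.

End Plane.

Theorem proposition1 (R : realType) (O : set (R * R)) :
  prop_i O ->
  (prop_star O ->
     forall w, bdry O w -> exists wd, bdry (antipolar O) wd /\ Lline wd w) /\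
  (prop_starstar O ->
     forall wd, bdry (antipolar O) wd -> exists w, bdry O w /\ Lline wd w).
Proof.
move=> Oi; split=> [Ostar w bdry_w | Oss wd bdry_wd].
  have [_ [cvxO [clO [zero_notin scO]]]] := Oi.
  have Ow := bdry_closed_mem clO bdry_w.
  have [wd Awd wd_w] :=
    star_supporting_antipolar cvxO clO zero_notin scO Ostar bdry_w.
  exists wd; split=> //; apply: (bdry_supported (f := w) Awd) => [p Ap|].
    by rewrite pairingC; exact: Ap w Ow.
  by rewrite pairingC.
have [c Oc wd_c] := starstar_antipolar_attained Oi Oss bdry_wd.
exists c; split=> //; apply: bdry_supported Oc _ wd_c.
exact: bdry_closed_mem (antipolar_closed (O := O)) bdry_wd.
Qed.
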